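(* For every $n\ge 0$, $\tilde h_n(q)=\bar c_{n+1}(q)$, where $\tilde h_n(q)=q^{n(n-1)/2}h_n(q^{-1})$ and $\bar c_n(q)$ are the Han–Zeng $q$-normalized median Genocchi numbers.
   Context: Han–Zeng polynomials: define $C_1(x,q)=1$ and for $n\ge2$ $$C_n(x,q)=(1+qx)\,\frac{(1+qx)\,C_{n-1}(1+qx,q)-x\,C_{n-1}(x,q)}{1+qx-x},$$ and set $\bar c_n(q)=C_n(1,q)/(1+q)^{n-1}$ for $n\ge1$ (these are polynomials in $q$). Gaussian binomial coefficients: $\binom{m}{k}_q=\frac{[m]_q!}{[k]_q![m-k]_q!}$, $[m]_q!=\prod_{i=1}^m\frac{1-q^i}{1-q}$, zero unless $0\le k\le m$. Let $W$ be $\mathbb C^n$ with basis $w_1,\dots,w_n$, $pr_k:W\to W$ the projection killing the $w_k$-coordinate. The degenerate flag variety $\mathrm{Fl}^a_n$ consists of tuples $(V_1,\dots,V_{n-1})$ of subspaces with $\dim V_k=k$ and $pr_{k+1}V_k\subset V_{k+1}$ ($k=1,\dots,n-2$); it has a decomposition into complex affine cells and $h_n(q)$ denotes its Poincaré polynomial with $q=t^2$ (degree $n(n-1)/2$, $h_0=h_1=1$). It is known that $h_n(q)=\sum_{f_1,\dots,f_{n-1}\ge 0} q^{\sum_{k=1}^{n-1}(k-f_k)(1-f_k+f_{k+1})}\prod_{k=1}^{n-1}\binom{1+f_{k-1}}{f_k}_{q}\binom{1+f_{k+1}}{f_k}_{q}$ with $f_0=f_n=0$. *)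

From HB Require Import structures.
From mathcomp Require Import all_boot all_order all_algebra.
Set Implicit Arguments. Unset Strict Implicit. Unset Printing Implicit Defensive.
Import Order.TTheory GRing.Theory Num.Theory.
Local Open Scope ring_scope.

Definition qint (R : fieldType) (t : R) (i : nat) : R := \sum_(j < i) t ^+ j.
Definition qfact (R : fieldType) (t : R) (m : nat) : R :=
  \prod_(i < m) qint t i.+1.
Definition qbinom (R : fieldType) (t : R) (m k : nat) : R :=
  if (k <= m)%N then qfact t m / (qfact t k * qfact t (m - k)) else 0.

(* The sequence f_0, f_1, ..., f_n with f_0 = f_n = 0 and f_k (1<=k<=n-1)
   read from the tuple s = (f_1, ..., f_{n-1}). *)
Definition fseq (n : nat) (s : seq nat) (k : nat) : nat :=
  if (0 < k < n)%N then nth 0%N s k.-1 else 0%N.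

(* Only tuples with all f_k < n are summed; all other terms vanish since a
   nonzero term forces f_k <= 1 + f_{k-1}, hence f_k <= k <= n-1. *)
Definition h_at (R : fieldType) (t : R) (n : nat) : R :=
  \sum_(f : (n.-1).-tuple 'I_n)
    let F := fseq n (map val f) in
    t ^ (\sum_(1 <= k < n) (((k : int) - (F k : int)) * (1 - (F k : int) + (F k.+1 : int))))
    * \prod_(1 <= k < n) (qbinom t (1 + F k.-1) (F k) * qbinom t (1 + F k.+1) (F k)).

Definition K := {fraction {poly rat}}.
Definition qK : K := tofrac 'X.

(* HZ m = C_{m+1}(x,q), as a polynomial in x over Q(q).
   C_1 = 1; C_n = (1+qx) * ((1+qx) C_{n-1}(1+qx) - x C_{n-1}(x)) / (1+qx-x).
   The quotient is exact; divp is Euclidean division in Q(q)[x]. *)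
Definition aK : {poly K} := 1 + qK *: 'X.
Fixpoint HZ (m : nat) : {poly K} :=
  match m with
  | 0 => 1
  | m'.+1 => aK * ((aK * (HZ m' \Po aK) - 'X * HZ m') %/ (aK - 'X))
  end.
Definition C (n : nat) : {poly K} := HZ n.-1.

Definition cbar (n : nat) : K := (C n).[1] / (1 + qK) ^+ n.-1.

Definition htilde (n : nat) : K := qK ^+ ((n * (n - 1)) %/ 2)%N * h_at qK^-1 n.

(* Both sides are identified with the weight of Motzkin paths of length n from
   height 0 to 0 (up steps lam_a = q[a], level steps mu_a = (1+q)[a+1]^2, down
   steps rho_a = [a][a+1]^2), up to the factor (1+q)^n.

   In the Newton basis N_k = (x-[1])...(x-[k]) the operator
      T defining C_(n+1) = T^n 1 acts by a three-term relation, so the Newton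
      coordinates of C_(n+1) are Motzkin weights; evaluating at x = 1 kills all
      N_k with k > 0, hence C_(n+1)(1) = motzkin n 0.
   2. Flag-variety side.  Inverting q -> 1/q in the q-binomials turns each
      summand of q^C(n,2) h_n(1/q) into a product of tridiagonal transfer
      weights tw(f_k, f_(k+1)) along the path 0 = f_0, ..., f_n = 0.  The vector
      nu_j * motzkin_j is mapped by tw to nu_(j+1) * motzkin_(j+1), so the sum
      over paths equals nu_n(0) motzkin n 0 = motzkin n 0 / (1+q)^n.
   Both steps work over any field in which q and all [k]_q (k > 0) are nonzero;
   the corollary is the case of the rational function field Q(q). *)

From HB Require Import structures.
From mathcomp Require Import all_boot all_order all_algebra.
From mathcomp Require Import ring zify.
Set Implicit Arguments. Unset Strict Implicit. Unset Printing Implicit Defensive.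
Import Order.TTheory GRing.Theory Num.Theory.
Local Open Scope ring_scope.

Section QCalculus.
Variables (R : fieldType) (t : R).

Lemma qint0 : qint t 0 = 0.
Proof. by rewrite /qint big_ord0. Qed.

Lemma qintS k : qint t k.+1 = 1 + t * qint t k.
Proof.
rewrite /qint big_ord_recl expr0 mulr_sumr; congr (_ + _).
by apply: eq_bigr => i _; rewrite exprS.
Qed.

Lemma qintSr k : qint t k.+1 = qint t k + t ^+ k.
Proof. by rewrite /qint big_ord_recr. Qed.

Lemma qint1 : qint t 1 = 1.
Proof. by rewrite qintS qint0 mulr0 addr0. Qed.

Lemma qint2 : qint t 2 = 1 + t.
Proof. by rewrite qintS qint1 mulr1. Qed.

Lemma qint_geom k : qint t k * (t - 1) = t ^+ k - 1.
Proof.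
elim: k => [|k IH]; first by rewrite qint0 mul0r expr0 subrr.
by rewrite qintSr mulrDl IH exprS; ring.
Qed.

Lemma qfact0 : qfact t 0 = 1.
Proof. by rewrite /qfact big_ord0. Qed.

Lemma qfactS m : qfact t m.+1 = qfact t m * qint t m.+1.
Proof. by rewrite /qfact big_ord_recr. Qed.

End QCalculus.

Lemma bin2D k l : 'C(k + l, 2) = ('C(k, 2) + 'C(l, 2) + k * l)%N.
Proof.
elim: l => [|l IH]; first by rewrite addn0 muln0 addn0 bin0n addn0.
rewrite addnS !binS !bin1 IH; lia.
Qed.

Lemma sum_window (M : nmodType) (g : nat -> M) B lo hi : (lo <= hi)%N ->
  (forall c, (B <= c)%N -> g c = 0) ->
  (forall c, (c < lo)%N || (hi <= c)%N -> g c = 0) ->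
  \sum_(c < B) g c = \sum_(lo <= c < hi) g c.
Proof.
move=> Hlh HB Hout; rewrite -(big_mkord xpredT).
have Hext N : (B <= N)%N -> \sum_(0 <= c < B) g c = \sum_(0 <= c < N) g c.
  move=> HN; rewrite (big_cat_nat (leq0n B) HN) /= [X in _ = _ + X]big_nat_cond.
  by rewrite [X in _ = _ + X]big1 ?addr0 // => c /andP[/andP[/HB]].
rewrite (Hext (maxn B hi)) ?leq_maxl // (big_cat_nat (leq0n lo)) /=; last first.
  by rewrite (leq_trans Hlh) ?leq_maxr.
rewrite [X in X + _]big_nat_cond big1 ?add0r; last first.
  by move=> c /andP[/andP[_ Hc] _]; apply: Hout; rewrite Hc.
rewrite (big_cat_nat Hlh (leq_maxr B hi)) /= [X in _ + X]big_nat_cond.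
by rewrite [X in _ + X]big1 ?addr0 // => c /andP[/andP[Hc _] _]; apply: Hout; rewrite Hc orbT.
Qed.

Lemma big_nat3 (M : nmodType) (g : nat -> M) a :
  \sum_(a <= c < a.+3) g c = g a + g a.+1 + g a.+2.
Proof. by rewrite big_ltn ?ltnS ?leqW // big_ltn // big_nat1 addrA. Qed.

Lemma sum_tupleS (M : nmodType) (T : finType) m (G : m.+1.-tuple T -> M) :
  \sum_(t : m.+1.-tuple T) G t = \sum_(x : T) \sum_(t : m.-tuple T) G [tuple of x :: t].
Proof.
rewrite pair_big /=.
rewrite (reindex (fun t : m.+1.-tuple T => (thead t, [tuple of behead t]))) /=.
  by apply: eq_bigr => t _; rewrite -tuple_eta.
exists (fun p : T * m.-tuple T => [tuple of p.1 :: p.2]) => [t _ | [x t] _] /=.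
  by rewrite -tuple_eta.
by rewrite theadE; congr pair; apply: val_inj.
Qed.

Lemma fseq_nth n s k : size s = n.-1 -> (k <= n)%N -> fseq n s k = nth 0%N (0%N :: s) k.
Proof.
move=> Hs; rewrite /fseq; case: k => [|k] Hk //=.
by case: ifP => // H; rewrite nth_default // Hs; lia.
Qed.

(* Exponent bookkeeping for summand_transfer: the exponent of q coming from
   q^C(n+1,2), from q -> 1/q in the weight, and from inverting the q-binomials,
   telescopes to the sum of the tw exponents f_(k+1)(f_(k+1) - f_k). *)
Lemma exponent_telescope (f : nat -> nat) n :
  \sum_(1 <= k < n.+1) ((k : int) - ((k : int) - (f k : int)) * (1 - (f k : int) + (f k.+1 : int))
     - (f k : int) * (Posz (1 + f k.-1)%N - (f k : int))
     - (f k : int) * (Posz (1 + f k.+1)%N - (f k : int)))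
  = \sum_(0 <= k < n.+1) ((f k.+1 : int) * ((f k.+1 : int) - (f k : int)))
    - (f n.+1 : int) * ((f n.+1 : int) - (f n : int)) - (n : int) * (f n.+1 : int).
Proof.
elim: n => [|n IH]; first by rewrite big_geq // big_nat1; ring.
by rewrite big_nat_recr // [in RHS]big_nat_recr //= IH !PoszD; ring.
Qed.

Section NewtonExpansion.
Variables (F : fieldType) (q : F).
Local Notation qi := (qint q).

Definition hz_a : {poly F} := 1 + q *: 'X.
Definition hz_op (P : {poly F}) : {poly F} :=
  hz_a * ((hz_a * (P \Po hz_a) - 'X * P) %/ (hz_a - 'X)).
Definition hz_poly (n : nat) : {poly F} := iter n hz_op 1.

Definition newton (k : nat) : {poly F} := \prod_(j < k) ('X - (qi j.+1)%:P).

(* The coefficients of the three-term action of T on the Newton basis. *)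
Definition lam (a : nat) : F := q * qi a.
Definition mu (a : nat) : F := (1 + q) * qi a.+1 ^+ 2.
Definition rho (a : nat) : F := qi a * qi a.+1 ^+ 2.

(* The exact quotient (a N_k(a) - x N_k(x)) / (a - x). *)
Definition newton_quot (k : nat) : {poly F} :=
  if k is k'.+1 then qi k'.+2 *: ('X * newton k') else 1.

Lemma newtonS k : newton k.+1 = newton k * ('X - (qi k.+1)%:P).
Proof. by rewrite /newton big_ord_recr. Qed.

Lemma hz_aE : hz_a = 1 + q%:P * 'X.
Proof. by rewrite /hz_a mul_polyC. Qed.

(* Substituting x := 1 + q x shifts the nodes: [j+1]_q = 1 + q [j]_q. *)
Lemma newton_comp k : newton k \Po hz_a = q ^+ k *: \prod_(j < k) ('X - (qi j)%:P).
Proof.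
elim: k => [|k IH]; first by rewrite /newton !big_ord0 expr0 scale1r comp_polyC.
rewrite newtonS comp_polyM IH comp_polyB comp_polyX comp_polyC big_ord_recr /=.
rewrite -!mul_polyC hz_aE qintS !rmorphD !rmorphM /= polyC1 exprS rmorphM /=.
ring.
Qed.

Lemma newton_compS k : newton k.+1 \Po hz_a = q ^+ k.+1 *: ('X * newton k).
Proof. by rewrite newton_comp big_ord_recl qint0 subr0. Qed.

Lemma hz_a_subX_neq0 : hz_a - 'X != 0.
Proof.
apply/negP => /eqP H; have := congr1 (fun p => p.[0]) H.
by rewrite hz_aE !hornerE /= subr0 => /eqP; apply/negP; apply: oner_neq0.
Qed.

Lemma hz_num_newton k :
  hz_a * (newton k \Po hz_a) - 'X * newton k = newton_quot k * (hz_a - 'X).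
Proof.
case: k => [|k].
  by rewrite /newton_quot /newton big_ord0 comp_polyC polyC1 !mulr1 mul1r.
rewrite newton_compS /newton_quot newtonS.
have Hq : q ^+ k.+1 = qi k.+1 * (q - 1) + 1 by rewrite qint_geom subrK.
rewrite Hq !qintS -!mul_polyC hz_aE !(rmorphD, rmorphM, rmorphB, polyC1) /=.
ring.
Qed.

Lemma hz_a_newton_quot k :
  hz_a * newton_quot k = lam k.+1 *: newton k.+1 + mu k *: newton k + rho k *: newton k.-1.
Proof.
case: k => [|k].
  rewrite /newton_quot /lam /mu /rho qint0 mul0r scale0r addr0 newtonS /newton.
  rewrite big_ord0 qint1 -!mul_polyC hz_aE.
  by rewrite !(rmorphD, rmorphM, rmorphB, rmorphXn, polyC1) /=; ring.
rewrite /newton_quot /lam /mu /rho /= !newtonS !qintS -!mul_polyC hz_aE.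
by rewrite !(rmorphD, rmorphM, rmorphB, rmorphXn, polyC1) /=; ring.
Qed.

Lemma hz_op_newton_comb S (c : nat -> F) :
  hz_op (\sum_(0 <= k < S) c k *: newton k)
  = \sum_(0 <= k < S) c k *: (hz_a * newton_quot k).
Proof.
have Hnum : hz_a * ((\sum_(0 <= k < S) c k *: newton k) \Po hz_a)
            - 'X * (\sum_(0 <= k < S) c k *: newton k)
          = (\sum_(0 <= k < S) c k *: newton_quot k) * (hz_a - 'X).
  rewrite linear_sum !mulr_sumr mulr_suml -sumrB; apply: eq_bigr => k _.
  by rewrite linearZ /= -!scalerAr -scalerBr hz_num_newton scalerAl.
rewrite /hz_op Hnum mulpK ?hz_a_subX_neq0 // mulr_sumr.
by apply: eq_bigr => k _; rewrite scalerAr.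
Qed.

(* Weighted Motzkin paths of length n ending at height a, with up steps
   weighted lam, level steps mu, down steps rho. *)
Fixpoint motzkin (n a : nat) : F :=
  match n with
  | 0 => (a == 0)%:R
  | n'.+1 => lam a * motzkin n' a.-1 + mu a * motzkin n' a + rho a.+1 * motzkin n' a.+1
  end.

Lemma motzkin_gt n a : (n < a)%N -> motzkin n a = 0.
Proof.
elim: n a => [|n IH] [|a] //= Ha.
by rewrite !IH ?mulr0 ?addr0 //; lia.
Qed.

Lemma lam0 : lam 0 = 0.
Proof. by rewrite /lam qint0 mulr0. Qed.

Lemma rho0 : rho 0 = 0.
Proof. by rewrite /rho qint0 mul0r. Qed.

Lemma hz_poly_newton n : hz_poly n = \sum_(0 <= k < n.+1) motzkin n k *: newton k.
Proof.
elim: n => [|n IH]; first by rewrite big_nat1 /= scale1r /newton big_ord0.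
rewrite [hz_poly _]/= -/(hz_poly n) IH hz_op_newton_comb.
under eq_bigr => k _ do rewrite hz_a_newton_quot !scalerDr !scalerA.
under [RHS]eq_bigr => k _ do rewrite /= !scalerDl.
rewrite !big_split /=; congr (_ + _ + _).
- rewrite [RHS]big_nat_recl // lam0 mul0r scale0r add0r.
  by apply: eq_bigr => k _; rewrite mulrC.
- rewrite [RHS]big_nat_recr //= motzkin_gt // mulr0 scale0r addr0.
  by apply: eq_bigr => k _; rewrite mulrC.
- rewrite [RHS]big_nat_recr //= motzkin_gt // mulr0 scale0r addr0.
  rewrite [LHS]big_nat_recl // rho0 mulr0 scale0r add0r.
  rewrite [RHS]big_nat_recr //= motzkin_gt // mulr0 scale0r addr0.
  by apply: eq_bigr => k _; rewrite mulrC.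
Qed.

Lemma newton_at1 k : (newton k).[1] = (k == 0)%:R.
Proof.
case: k => [|k]; first by rewrite /newton big_ord0 hornerE.
by rewrite /newton big_ord_recl hornerM !hornerE qint1 subrr mul0r.
Qed.

Lemma hz_poly_at1 n : (hz_poly n).[1] = motzkin n 0.
Proof.
rewrite hz_poly_newton horner_sum big_nat_recl // hornerZ newton_at1 mulr1.
by rewrite big1 ?addr0 // => k _; rewrite hornerZ newton_at1 mulr0.
Qed.

End NewtonExpansion.

Section TransferMatrix.
Variables (F : fieldType) (q : F).
Hypothesis q_neq0 : q != 0.
Hypothesis qint_neq0 : forall k, (0 < k)%N -> qint q k != 0.
Local Notation qi := (qint q).

Lemma expq_neq0 n : q ^+ n != 0.
Proof. by rewrite expf_neq0. Qed.

Lemma qfact_neq0 m : qfact q m != 0.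
Proof.
elim: m => [|m IH]; first by rewrite qfact0 oner_neq0.
by rewrite qfactS mulf_neq0 // qint_neq0.
Qed.

Lemma qbinom_gt m k : (m < k)%N -> qbinom q m k = 0.
Proof. by rewrite /qbinom ltnNge => /negbTE ->. Qed.

Lemma qbinom_n0 m : qbinom q m 0 = 1.
Proof. by rewrite /qbinom leq0n subn0 qfact0 mul1r divff // qfact_neq0. Qed.

Lemma qbinom_nn m : qbinom q m m = 1.
Proof. by rewrite /qbinom leqnn subnn qfact0 mulr1 divff // qfact_neq0. Qed.

Lemma qbinom_Snn m : qbinom q m.+1 m = qi m.+1.
Proof.
rewrite /qbinom leqnSn subSnn (qfactS _ 0) qfact0 mul1r qint1 mulr1 qfactS.
by rewrite mulrC mulKf // qfact_neq0.
Qed.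

Lemma qbinom_SSnn m : qbinom q m.+2 m = qi m.+2 * qi m.+1 / qi 2.
Proof.
rewrite /qbinom (leq_trans (leqnSn m) (leqnSn _)) (_ : (m.+2 - m = 2)%N); last lia.
rewrite !qfactS qfact0 mul1r qint1 mul1r.
have Hm := qfact_neq0 m; have H2 := qint_neq0 (isT : (0 < 2)%N).
by field; rewrite Hm H2.
Qed.

Lemma qint_inv i : qint q^-1 i * q ^+ i.-1 = qi i.
Proof.
elim: i => [|[|i] IH]; first by rewrite !qint0 mul0r.
  by rewrite !qint1 expr0 mulr1.
rewrite qintS mulrDl mul1r exprSr.
have -> : q^-1 * qint q^-1 i.+1 * (q ^+ i * q) = (qint q^-1 i.+1 * q ^+ i) * (q^-1 * q).
  by ring.
by rewrite IH mulVf // mulr1 [qi i.+2]qintSr addrC exprSr.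
Qed.

Lemma qfact_inv m : qfact q^-1 m * q ^+ 'C(m, 2) = qfact q m.
Proof.
elim: m => [|m IH]; first by rewrite !qfact0 mul1r.
by rewrite !qfactS binS bin1 exprD -(qint_inv m.+1) /= -IH; ring.
Qed.

Lemma qfact_inv_neq0 m : qfact q^-1 m != 0.
Proof.
by apply: contra (qfact_neq0 m) => /eqP H0; rewrite -qfact_inv H0 mul0r.
Qed.

Lemma qbinom_inv m k :
  qbinom q^-1 m k = q ^ (- ((k : int) * ((m : int) - (k : int)))) * qbinom q m k.
Proof.
rewrite /qbinom; case: leqP => Hkm; last by rewrite mulr0.
have -> : (k : int) * ((m : int) - (k : int)) = (k * (m - k))%N by rewrite PoszM subzn.
rewrite -exprnN -(qfact_inv m) -(qfact_inv k) -(qfact_inv (m - k)).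
have -> : 'C(m, 2) = ('C(k, 2) + 'C(m - k, 2) + k * (m - k))%N.
  by rewrite -bin2D subnKC.
rewrite !exprD.
by field; rewrite !qfact_inv_neq0 !expq_neq0.
Qed.

(* The transfer weight of a step a -> c of the path f in tilde h_n. *)
Definition tw (a c : nat) : F :=
  q ^ ((c : int) * ((c : int) - (a : int))) * qbinom q (1 + a) c * qbinom q (1 + c) a.

Lemma tw_far a c : (a.+1 < c)%N || (c.+1 < a)%N -> tw a c = 0.
Proof.
case/orP => H; rewrite /tw.
  by rewrite (qbinom_gt (m := 1 + a)) ?mulr0 ?mul0r.
by rewrite (qbinom_gt (m := 1 + c) (k := a)) ?mulr0.
Qed.

Lemma tw_diag a : tw a a = qi a.+1 ^+ 2.
Proof. by rewrite /tw subrr mulr0 expr0z mul1r add1n qbinom_Snn expr2. Qed.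

Lemma tw_up a : tw a a.+1 = q ^+ a.+1 * (qi a.+2 * qi a.+1 / qi 2).
Proof.
rewrite /tw (_ : (a.+1 : int) - (a : int) = 1); last by lia.
by rewrite mulr1 add1n qbinom_nn mulr1 add1n qbinom_SSnn.
Qed.

Lemma tw_down a : tw a.+1 a = (q ^+ a)^-1 * (qi a.+2 * qi a.+1 / qi 2).
Proof.
rewrite /tw (_ : (a : int) * ((a : int) - (a.+1 : int)) = - (a : int)); last by lia.
by rewrite -exprnN add1n qbinom_SSnn add1n qbinom_nn mulr1.
Qed.

Lemma onep_neq0 : 1 + q != 0.
Proof. by rewrite -qint2 qint_neq0. Qed.

Lemma exp_onep_neq0 n : (1 + q) ^+ n != 0.
Proof. by rewrite expf_neq0 // onep_neq0. Qed.

(* The normalisation turning Motzkin weights into an eigenvector of tw: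
   nu_j(c) = [c+1]! / ((1+q)^j q^C(c+1,2)). *)
Definition nu (j c : nat) : F := qfact q c.+1 / ((1 + q) ^+ j * q ^+ 'C(c.+1, 2)).

Lemma nuS j c : nu j.+1 c = nu j c / (1 + q).
Proof. by rewrite /nu exprS -[(1 + q) * _ * _]mulrA invfM mulrA mulrAC. Qed.

Lemma tw_down_nu j a : tw a.+1 a * nu j a = lam q a.+1 * nu j.+1 a.+1.
Proof.
rewrite tw_down /lam /nu !qfactS !binS !bin1 !bin0 !exprD qint2 !exprS.
by field; rewrite ?q_neq0 ?onep_neq0 ?expq_neq0 ?exp_onep_neq0 ?qfact_neq0 ?qint_neq0.
Qed.

Lemma tw_diag_nu j a : tw a a * nu j a = mu q a * nu j.+1 a.
Proof. by rewrite tw_diag /mu nuS; field; rewrite onep_neq0. Qed.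

Lemma tw_up_nu j a : tw a a.+1 * nu j a.+1 = rho q a.+1 * nu j.+1 a.
Proof.
rewrite tw_up /rho /nu !qfactS !binS !bin1 !bin0 !exprD qint2 !exprS.
by field; rewrite ?q_neq0 ?onep_neq0 ?expq_neq0 ?exp_onep_neq0 ?qfact_neq0 ?qint_neq0.
Qed.

(* One step of the transfer matrix maps nu_j * motzkin_j to nu_(j+1) * motzkin_(j+1):
   this is the Motzkin recurrence in disguise. *)
Lemma transfer_step j a B : (j < B)%N ->
  \sum_(c < B) tw a c * (nu j c * motzkin q j c) = nu j.+1 a * motzkin q j.+1 a.
Proof.
move=> HjB; pose g a' c := tw a' c * (nu j c * motzkin q j c).
have Hsupp a' c : (B <= c)%N -> g a' c = 0.
  by move=> Hc; rewrite /g motzkin_gt ?mulr0 //; apply: leq_trans Hc.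
have Hfar a' c : (a'.+1 < c)%N || (c.+1 < a')%N -> g a' c = 0.
  by move=> Hc; rewrite /g tw_far // mul0r.
change (\sum_(c < B) g a c = nu j.+1 a * motzkin q j.+1 a).
case: a => [|a].
  rewrite (sum_window (lo := 0) (hi := 2) _ (Hsupp 0)) // => [|c Hc]; last first.
    by apply: Hfar; case/orP: Hc => // ->.
  rewrite big_ltn // big_nat1 /g !(mulrA (tw _ _) (nu _ _)) tw_diag_nu tw_up_nu /=.
  by rewrite lam0 mul0r add0r; ring.
have Ha3 : (a <= a.+3)%N by rewrite !leqW.
rewrite (sum_window (lo := a) (hi := a.+3) Ha3 (Hsupp a.+1)) // => [|c Hc]; last first.
  by apply: Hfar; lia.
rewrite big_nat3 /g !(mulrA (tw _ _) (nu _ _)) tw_down_nu tw_diag_nu tw_up_nu /=.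
by ring.
Qed.

(* Weighted sum over paths a = f_0, f_1, ..., f_m, f_(m+1) = 0 with heights in [0, B). *)
Definition path_sum (B m a : nat) : F :=
  \sum_(f : m.-tuple 'I_B)
    \prod_(0 <= k < m.+1) tw (nth 0%N (a :: map val f) k) (nth 0%N (a :: map val f) k.+1).

Lemma path_sumS B m a : path_sum B m.+1 a = \sum_(c < B) tw a c * path_sum B m c.
Proof.
rewrite /path_sum sum_tupleS; apply: eq_bigr => x _; rewrite mulr_sumr.
by apply: eq_bigr => t _; rewrite big_nat_recl.
Qed.

Lemma path_sum0 B a : path_sum B 0 a = tw a 0.
Proof.
rewrite /path_sum (big_pred1 [tuple]) ?big_nat1 // => t.
by apply/esym/eqP; apply: tuple0.
Qed.

Lemma nu0_motzkin0 c : nu 0 c * motzkin q 0 c = (c == 0)%:R.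
Proof.
case: c => [|c] /=; last by rewrite mulr0.
by rewrite /nu (qfactS _ 0) qfact0 qint1 bin_small // !expr0 !mulr1 mul1r invr1.
Qed.

Lemma path_sum_motzkin B m a : (m < B)%N ->
  path_sum B m a = nu m.+1 a * motzkin q m.+1 a.
Proof.
elim: m a => [|m IH] a Hm.
  rewrite path_sum0 -(transfer_step a Hm); case: B Hm => [//|B] _.
  rewrite big_ord_recl /= nu0_motzkin0 mulr1 big1 ?addr0 // => c _.
  by rewrite nu0_motzkin0 mulr0.
rewrite path_sumS -(transfer_step a Hm).
by apply: eq_bigr => c _; rewrite IH // ltnW.
Qed.

Lemma qbinom_prod_shift (f : nat -> nat) n : f 0 = 0%N -> f n.+1 = 0%N ->
  \prod_(1 <= k < n.+1) (qbinom q (1 + f k.-1) (f k) * qbinom q (1 + f k.+1) (f k))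
  = \prod_(0 <= k < n.+1) (qbinom q (1 + f k) (f k.+1) * qbinom q (1 + f k.+1) (f k)).
Proof.
move=> f0 fn; rewrite !big_split /=; congr (_ * _).
  by rewrite [RHS]big_nat_recr // fn qbinom_n0 Monoid.mulm1 big_add1.
by rewrite [RHS]big_nat_recl // f0 qbinom_n0 mul1r big_add1.
Qed.

Lemma prod_expz I (r : seq I) (P : pred I) (z : I -> int) (y : I -> F) :
  \prod_(i <- r | P i) (q ^ z i * y i)
  = q ^ (\sum_(i <- r | P i) z i) * \prod_(i <- r | P i) y i.
Proof.
rewrite big_split /=; congr (_ * _).
by rewrite (big_morph (fun z => q ^ z) (fun x y => expfzDr x y q_neq0) (expr0z q)).
Qed.

Lemma summand_transfer (f : nat -> nat) n : f 0 = 0%N -> f n.+1 = 0%N ->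
  q ^+ 'C(n.+1, 2) *
    (q^-1 ^ (\sum_(1 <= k < n.+1) (((k : int) - (f k : int)) * (1 - (f k : int) + (f k.+1 : int))))
     * \prod_(1 <= k < n.+1) (qbinom q^-1 (1 + f k.-1) (f k) * qbinom q^-1 (1 + f k.+1) (f k)))
  = \prod_(0 <= k < n.+1) tw (f k) (f k.+1).
Proof.
move=> f0 fn.
under eq_bigr => k _ do rewrite !qbinom_inv mulrACA -expfzDr //.
rewrite prod_expz /tw; under [RHS]eq_bigr => k _ do rewrite -mulrA.
rewrite prod_expz -qbinom_prod_shift //.
rewrite exprz_inv exprnP mulrA -expfzDr // mulrA -expfzDr //.
congr (q ^ _ * _).
have HC : ('C(n.+1, 2) : int) = \sum_(1 <= k < n.+1) (k : int).
  rewrite -bin2_sum big_nat_recl // add0n (big_morph Posz PoszD (erefl (Posz 0))).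
  by rewrite [RHS]big_add1.
have E := exponent_telescope f n; rewrite fn mul0r subr0 mulr0 subr0 in E.
rewrite HC -E -sumrN -!big_split /=.
by apply: eq_bigr => k _; ring.
Qed.

Theorem htilde_motzkin n :
  q ^+ ((n * (n - 1)) %/ 2) * h_at q^-1 n = (hz_poly q n).[1] / (1 + q) ^+ n.
Proof.
case: n => [|m].
  rewrite /h_at mul0n div0n expr0 mul1r (big_pred1 [tuple]); last first.
    by move=> t; apply/esym/eqP; apply: tuple0.
  by rewrite !big_geq // expr0z mul1r expr0 divr1 hornerE.
have -> : ((m.+1 * (m.+1 - 1)) %/ 2)%N = 'C(m.+1, 2) by rewrite bin2 subn1 divn2.
rewrite /h_at mulr_sumr.
transitivity (path_sum m.+1 m 0).
  apply: eq_bigr => f _; rewrite summand_transfer //; last by rewrite /fseq ltnn andbF.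
  apply: eq_big_nat => k Hk.
  by rewrite !fseq_nth // ?size_map ?size_tuple //; lia.
rewrite path_sum_motzkin // hz_poly_at1 /nu (qfactS _ 0) qfact0 qint1.
by rewrite (_ : 'C(1, 2) = 0%N) // expr0 !mulr1 mul1r mulrC.
Qed.

End TransferMatrix.

(* In Q(q), q and all [k]_q (k > 0) are nonzero: [k]_q has constant term 1. *)
Lemma qK_neq0 : qK != 0.
Proof. by rewrite /qK tofrac_eq0 polyX_eq0. Qed.

Lemma qint_qK_neq0 k : (0 < k)%N -> qint qK k != 0.
Proof.
case: k => // k _.
have -> : qint qK k.+1 = tofrac (\sum_(j < k.+1) 'X^j : {poly rat}).
  by rewrite rmorph_sum /qint; apply: eq_bigr => j _; rewrite rmorphXn.
rewrite tofrac_eq0; apply/eqP => /(congr1 (horner^~ 0)).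
rewrite horner_sum hornerC big_ord_recl /= hornerXn expr0 big1 ?addr0.
  by move/eqP; rewrite oner_eq0.
by move=> i _; rewrite hornerXn expr0n.
Qed.

Lemma HZ_hz_poly n : HZ n = hz_poly qK n.
Proof. by elim: n => //= n ->. Qed.

Theorem corollary3p5 (n : nat) : htilde n = cbar n.+1.
Proof.
rewrite /htilde /cbar /C /= HZ_hz_poly.
exact: (htilde_motzkin qK_neq0 qint_qK_neq0 n).
Qed.
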